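(* The Directed Simplicial Weisfeiler–Leman (D-SWL) test with the restricted update rule $c^{t+1}_\sigma=\operatorname{HASH}\big(c^t_\sigma,c^t_{\mathcal{B}}(\sigma),((c^{ij}_\uparrow)^t(\sigma))_{i,j}\big)$ is as powerful as D-SWL with the generalised update rule $c^{t+1}_\sigma=\operatorname{HASH}\big(c^t_\sigma,c^t_{\mathcal{B}}(\sigma),c^t_{\mathcal{C}}(\sigma),((c^{ij}_\downarrow)^t(\sigma))_{i,j},((c^{ij}_\uparrow)^t(\sigma))_{i,j}\big)$. That is, for any two directed simplicial complexes $\mathcal{K}_1, \mathcal{K}_2$, the restricted test distinguishes them if and only if the generalised test distinguishes them.
   Context: A directed simplicial complex is a pair $\mathcal{K}=(V,\Sigma)$, where $V$ is a finite vertex set and $\Sigma$ is a collection of non-empty ordered tuples of vertices (directed simplices) that is closed under taking non-empty ordered subtuples. A tuple $\sigma=(v_0,\dots,v_n)$ has dimension $n$. For $0\le i\le n$, the face map $d_i(\sigma)$ is the tuple obtained by deleting the $i$-th vertex and keeping the order of the rest; $d_i^{-1}(\sigma)$ is the set of simplices $\rho$ with $d_i(\rho)=\sigma$. For simplices of equal dimension: - $\tau\in\mathcal{A}^{ij}_\downarrow(\sigma)$ if there is a $\kappa$ with $d_i(\sigma)=\kappa=d_j(\tau)$. - $\tau\in\mathcal{A}^{ij}_\uparrow(\sigma)$ if there is a $\kappa$ with $d_i(\kappa)=\sigma$ and $d_j(\kappa)=\tau$. The D-SWL test assigns colours $c^t$ to all simplices, where $c^0$ is the same colour for every simplex and HASH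 is an injective function. For an $n$-simplex $\sigma$, the following colourings are used: - The boundary colouring is the ordered tuple $c^t_{\mathcal{B}}(\sigma)=(c^t_{d_0(\sigma)},\dots,c^t_{d_n(\sigma)})$, which is empty for vertices. - The coboundary colouring is $c^t_{\mathcal{C}}(\sigma)=\bigcup_{i=0}^{n+1}\{\{c^t_\tau:\tau\in d_i^{-1}(\sigma)\}\}$. - The down colouring is $(c^{ij}_\downarrow)^t(\sigma)=\{\{(c^t_\tau,c^t_\kappa):\tau\in\mathcal{A}^{ij}_\downarrow(\sigma),\ d_i(\sigma)=\kappa=d_j(\tau)\}\}$. - The up colouring is $(c^{ij}_\uparrow)^t(\sigma)=\{\{(c^t_\tau,c^t_\kappa):\tau\in\mathcal{A}^{ij}_\uparrow(\sigma),\ d_i(\kappa)=\sigma,\ d_j(\kappa)=\tau\}\}$. The tuple of down colourings ranges over all index pairs $(i,j)$ for which the face maps are defined, and likewise for the up colourings. Colours are refined until they stabilize. The test distinguishes two complexes if their stable colour histograms differ; the two complexes are coloured jointly, i.e., with the same HASH. *)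

From mathcomp Require Import all_boot.
Set Implicit Arguments. Unset Strict Implicit. Unset Printing Implicit Defensive.

(* Directed simplicial complexes: a simplex is a non-empty tuple (seq) of
   vertices; a simplex of dimension n is a seq of size n+1.  The collection of
   simplices is a duplicate-free seq closed under non-empty subsequences. *)
Definition is_dsc (V : finType) (S : seq (seq V)) : Prop :=
  [/\ uniq S,
      (forall s, s \in S -> s != [::]) &
      (forall s t, t \in S -> subseq s t -> s != [::] -> s \in S)].

Definition face (V : Type) (i : nat) (s : seq V) : seq V :=
  take i s ++ drop i.+1 s.

Definition bnd_col (V C : Type) (c : seq V -> C) (s : seq V) : seq C :=
  if 1 < size s then [seq c (face i s) | i <- iota 0 (size s)] else [::].

Definition cobnd_col (V : eqType) (C : Type) (S : seq (seq V)) (c : seq V -> C)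
  (s : seq V) : seq C :=
  flatten [seq [seq c r | r <- S & (size r == (size s).+1) && (face i r == s)]
          | i <- iota 0 (size s).+1].

Definition down_col (V : eqType) (C : Type) (S : seq (seq V)) (c : seq V -> C)
  (i j : nat) (s : seq V) : seq (C * C) :=
  [seq (c t, c (face i s)) | t <- S &
      [&& size t == size s, 1 < size s & face j t == face i s]].

Definition down_cols (V : eqType) (C : Type) (S : seq (seq V)) (c : seq V -> C)
  (s : seq V) : seq (seq (C * C)) :=
  [seq down_col S c i j s | i <- iota 0 (size s), j <- iota 0 (size s)].

Definition up_col (V : eqType) (C : Type) (S : seq (seq V)) (c : seq V -> C)
  (i j : nat) (s : seq V) : seq (C * C) :=
  [seq (c (face j k), c k) | k <- S & (size k == (size s).+1) && (face i k == s)].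

Definition up_cols (V : eqType) (C : Type) (S : seq (seq V)) (c : seq V -> C)
  (s : seq V) : seq (seq (C * C)) :=
  [seq up_col S c i j s | i <- iota 0 (size s).+1, j <- iota 0 (size s).+1].

(* Signatures fed to HASH.  Multisets are represented by seqs; HASH must be
   injective on multisets, i.e. H a = H b iff the signatures agree, with
   multiset components compared up to permutation. *)
Definition gen_sig (C : Type) : Type :=
  (C * seq C * seq C * seq (seq (C * C)) * seq (seq (C * C)))%type.
Definition res_sig (C : Type) : Type :=
  (C * seq C * seq (seq (C * C)))%type.

Definition gen_sig_eq (C : eqType) (a b : gen_sig C) : Prop :=
  let: (x, bd, cb, dn, up) := a in
  let: (x', bd', cb', dn', up') := b in
  [/\ x = x', bd = bd', perm_eq cb cb', all2 perm_eq dn dn' & all2 perm_eq up up'].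

Definition res_sig_eq (C : eqType) (a b : res_sig C) : Prop :=
  let: (x, bd, up) := a in
  let: (x', bd', up') := b in
  [/\ x = x', bd = bd' & all2 perm_eq up up'].

Definition gen_hash_inj (C : eqType) (H : gen_sig C -> C) : Prop :=
  forall a b, H a = H b <-> gen_sig_eq a b.
Definition res_hash_inj (C : eqType) (H : res_sig C -> C) : Prop :=
  forall a b, H a = H b <-> res_sig_eq a b.

Fixpoint gen_col (V : eqType) (C : Type) (H : gen_sig C -> C) (c0 : C)
  (S : seq (seq V)) (t : nat) : seq V -> C :=
  match t with
  | 0 => fun _ => c0
  | t'.+1 => let c := gen_col H c0 S t' in
      fun s => H (c s, bnd_col c s, cobnd_col S c s, down_cols S c s, up_cols S c s)
  end.

Fixpoint res_col (V : eqType) (C : Type) (H : res_sig C -> C) (c0 : C)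
  (S : seq (seq V)) (t : nat) : seq V -> C :=
  match t with
  | 0 => fun _ => c0
  | t'.+1 => let c := res_col H c0 S t' in
      fun s => H (c s, bnd_col c s, up_cols S c s)
  end.

Definition stable_at (V1 V2 : eqType) (C : Type)
  (col1 : nat -> seq V1 -> C) (S1 : seq (seq V1))
  (col2 : nat -> seq V2 -> C) (S2 : seq (seq V2)) (t : nat) : Prop :=
  [/\ (forall s s', s \in S1 -> s' \in S1 ->
         (col1 t s = col1 t s' <-> col1 t.+1 s = col1 t.+1 s')),
      (forall s s', s \in S2 -> s' \in S2 ->
         (col2 t s = col2 t s' <-> col2 t.+1 s = col2 t.+1 s')) &
      (forall s s', s \in S1 -> s' \in S2 ->
         (col1 t s = col2 t s' <-> col1 t.+1 s = col2 t.+1 s'))].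

Definition histogram (V : eqType) (C : Type) (c : seq V -> C) (S : seq (seq V)) : seq C :=
  [seq c s | s <- S].

Definition distinguishes (V1 V2 : eqType) (C : eqType)
  (col1 : nat -> seq V1 -> C) (S1 : seq (seq V1))
  (col2 : nat -> seq V2 -> C) (S2 : seq (seq V2)) : Prop :=
  exists t, stable_at col1 S1 col2 S2 t /\
            ~~ perm_eq (histogram (col1 t) S1) (histogram (col2 t) S2).

From mathcomp Require Import all_boot zify.
Set Implicit Arguments. Unset Strict Implicit. Unset Printing Implicit Defensive.

(* Both tests refine their colourings round by round, and the generalised
   colouring at round t refines the restricted one at round t.  Conversely the
   restricted colouring at round 2t refines the generalised one at round t: the
   coboundary multiset of s is the second projection of its (i,0) up colourings,
   and the (i,j) down colouring of s is the (j,0) up colouring of the face d_i s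
   read backwards, paired with the colour of d_i s; these up colourings of d_i s
   enter its colour, hence the boundary colouring of s, one round later.  A colour
   partition that is stable for one round stays stable forever, so the two tests
   stabilise to the same partition of the simplices of both complexes and
   compare the same histograms. *)

Lemma all2_map (T U W : Type) (r : U -> W -> bool) (f : T -> U) (g : T -> W) s :
  all2 r (map f s) (map g s) = all (fun x => r (f x) (g x)) s.
Proof. by elim: s => //= x s ->. Qed.

Lemma all2_allpairsP (I J : eqType) (T U : Type) (r : T -> U -> bool)
    (f : I -> J -> T) (g : I -> J -> U) (s : seq I) (t : seq J) :
  reflect (forall i j, i \in s -> j \in t -> r (f i j) (g i j))
          (all2 r [seq f i j | i <- s, j <- t] [seq g i j | i <- s, j <- t]).
Proof.
have pairsE (W : Type) (h : I -> J -> W) :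
    [seq h i j | i <- s, j <- t] = map (fun p => h p.1 p.2) [seq (i, j) | i <- s, j <- t].
  by rewrite map_allpairs.
rewrite (pairsE _ f) (pairsE _ g) all2_map; apply: (iffP allP) => [rfg i j iS jt | rfg [i j]].
  by apply: (rfg (i, j)); apply/allpairsP; exists (i, j).
by case/allpairsP=> -[i' j'] /= [iS jt [-> ->]]; apply: rfg.
Qed.

Lemma map_refines (A B : eqType) (T U : Type) (fa : A -> T) (fb : B -> T)
    (ga : A -> U) (gb : B -> U) (sa : seq A) (sb : seq B) :
  (forall a b, a \in sa -> b \in sb -> fa a = fb b -> ga a = gb b) ->
  map fa sa = map fb sb -> map ga sa = map gb sb.
Proof.
elim: sa sb => [|a sa IH] [|b sb] //= fg [fab fsab].
rewrite (fg a b) ?mem_head // (IH sb) // => a' b' a'sa b'sb.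
by apply: fg; rewrite inE ?a'sa ?b'sb orbT.
Qed.

Lemma perm_map_refines (A B T U : eqType) (fa : A -> T) (fb : B -> T)
    (ga : A -> U) (gb : B -> U) (sa : seq A) (sb : seq B) :
  (forall a b, a \in sa -> b \in sb -> fa a = fb b -> ga a = gb b) ->
  perm_eq (map fa sa) (map fb sb) -> perm_eq (map ga sa) (map gb sb).
Proof.
elim: sa sb => [|a sa IH] sb fg; first by case: sb fg => // b sb _ /perm_size.
move=> fab_perm; have /mapP[b bsb fab] : fa a \in map fb sb.
  by rewrite -(perm_mem fab_perm) mem_head.
have sb_rem := perm_to_rem bsb.
rewrite (permPr (perm_map gb sb_rem)) /= -(fg a b) ?mem_head // perm_cons.
apply: IH => [a' b' a'sa /mem_rem b'sb|]; first by apply: fg; rewrite ?inE ?a'sa ?orbT.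
by move: fab_perm; rewrite (permPr (perm_map fb sb_rem)) /= -fab perm_cons.
Qed.

Lemma perm_flatten_map (I T : eqType) (f g : I -> seq T) (s : seq I) :
  (forall i, i \in s -> perm_eq (f i) (g i)) ->
  perm_eq (flatten (map f s)) (flatten (map g s)).
Proof.
elim: s => //= i s IH fg; apply: perm_cat; first by rewrite fg ?mem_head.
by apply: IH => j js; rewrite fg // inE js orbT.
Qed.

Lemma size_face (V : Type) i (s : seq V) : i < size s -> size (face i s) = (size s).-1.
Proof. by move=> lt_is; rewrite size_cat size_take size_drop lt_is; lia. Qed.

Lemma face_subseq (V : eqType) i (s : seq V) : subseq (face i s) s.
Proof.
have := cat_subseq (subseq_refl (take i s)) (drop_subseq (drop i s) 1).
by rewrite drop_drop cat_take_drop add1n.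
Qed.

Definition faces (V : Type) (s : seq V) : seq (seq V) :=
  if 1 < size s then [seq face i s | i <- iota 0 (size s)] else [::].

Lemma bnd_colE (V C : Type) (c : seq V -> C) s : bnd_col c s = map c (faces s).
Proof. by rewrite /bnd_col /faces; case: ifP => // _; rewrite -map_comp. Qed.

Lemma bnd_col_face (Va Vb C : Type) (ca : seq Va -> C) (cb : seq Vb -> C) x y i :
  size x = size y -> bnd_col ca x = bnd_col cb y -> 1 < size x -> i < size x ->
  ca (face i x) = cb (face i y).
Proof.
move=> Exy bxy x1 ix; move: bxy; rewrite /bnd_col -Exy x1 => /eq_in_map; apply.
by rewrite mem_iota.
Qed.

Section Complex.
Variables (V : finType) (S : seq (seq V)).
Hypothesis dS : is_dsc S.

Lemma dsc_size_gt0 s : s \in S -> 0 < size s.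
Proof. by case: dS => _ nonempty _ /nonempty; rewrite lt0n size_eq0. Qed.

(* No bound on [i] is needed: for [i >= size s], [face i s = s]. *)
Lemma dsc_face i s : s \in S -> 1 < size s -> face i s \in S.
Proof.
case: dS => _ _ subS sS s1; apply: subS sS (face_subseq i s) _.
rewrite -size_eq0 size_cat size_take size_drop; case: ifP => _; lia.
Qed.

Lemma dsc_faces s : s \in S -> {subset faces s <= S}.
Proof.
rewrite /faces => sS a; case: ifP => // s1 /mapP[i _ ->]; exact: dsc_face.
Qed.

End Complex.

Lemma size_up_cols (V : eqType) (C : Type) S (c : seq V -> C) s :
  size (up_cols S c s) = (size s).+1 * (size s).+1.
Proof. by rewrite size_allpairs size_iota. Qed.

Lemma up_colsP (Va Vb : eqType) (C : eqType) Sa Sb (ca : seq Va -> C) (cb : seq Vb -> C) x y :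
  all2 perm_eq (up_cols Sa ca x) (up_cols Sb cb y) <->
  size x = size y /\
  (forall i j, i <= size x -> j <= size x -> perm_eq (up_col Sa ca i j x) (up_col Sb cb i j y)).
Proof.
split=> [up_xy | [Exy up_ij]].
  have Exy : size x = size y.
    by move: up_xy; rewrite all2E !size_up_cols => /andP[/eqP]; nia.
  split=> // i j ix jx; move: up_xy; rewrite /up_cols -Exy => /all2_allpairsP.
  by apply; rewrite mem_iota.
rewrite /up_cols -Exy; apply/all2_allpairsP => i j; rewrite !mem_iota /= => ix jx.
exact: up_ij.
Qed.

Lemma cobnd_colE (V : eqType) (C : Type) S (c : seq V -> C) s :
  cobnd_col S c s = flatten [seq unzip2 (up_col S c i 0 s) | i <- iota 0 (size s).+1].
Proof. by congr flatten; apply: eq_map => i; rewrite /unzip2 -map_comp. Qed.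

Lemma cobnd_col_of_up_cols (Va Vb C : eqType) Sa Sb (ca : seq Va -> C) (cb : seq Vb -> C) x y :
  all2 perm_eq (up_cols Sa ca x) (up_cols Sb cb y) ->
  perm_eq (cobnd_col Sa ca x) (cobnd_col Sb cb y).
Proof.
case/up_colsP=> Exy up_ij; rewrite !cobnd_colE -Exy.
by apply: perm_flatten_map => i; rewrite mem_iota => ix; apply/perm_map/up_ij.
Qed.

Lemma down_col_small (V : eqType) (C : Type) S (c : seq V -> C) i j s :
  size s <= 1 -> down_col S c i j s = [::].
Proof.
move=> s1; rewrite /down_col (@eq_filter _ _ pred0) ?filter_pred0 // => t.
by rewrite ltnNge s1 andbF.
Qed.

Lemma down_colE (V : eqType) (C : Type) S (c : seq V -> C) i j s :
  1 < size s -> i < size s ->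
  down_col S c i j s = [seq (z, c (face i s)) | z <- unzip2 (up_col S c j 0 (face i s))].
Proof.
move=> s1 is_; rewrite /down_col /up_col size_face // prednK; last exact: ltnW.
have -> : [seq t <- S | [&& size t == size s, 1 < size s & face j t == face i s]] =
          [seq t <- S | (size t == size s) && (face j t == face i s)].
  by apply: eq_filter => t; rewrite s1.
by rewrite /unzip2 -!map_comp.
Qed.

Lemma down_cols_of_faces (Va Vb C : eqType) Sa Sb (ca : seq Va -> C) (cb : seq Vb -> C) x y :
  size x = size y -> bnd_col ca x = bnd_col cb y ->
  (1 < size x -> forall i, i < size x ->
     all2 perm_eq (up_cols Sa ca (face i x)) (up_cols Sb cb (face i y))) ->
  all2 perm_eq (down_cols Sa ca x) (down_cols Sb cb y).
Proof.
move=> Exy bxy up_faces; rewrite /down_cols -Exy.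
apply/all2_allpairsP => i j; rewrite !mem_iota /= => ix jx.
have [x1|x_le1] := ltnP 1 (size x); last by rewrite !down_col_small -?Exy.
have y1 : 1 < size y by rewrite -Exy.
rewrite !down_colE -?Exy // -(bnd_col_face Exy bxy x1 ix).
have /up_colsP[_ up_ij] := up_faces x1 i ix.
by apply/perm_map/perm_map/up_ij; rewrite // size_face //; lia.
Qed.

Definition refines2 (A B : eqType) (C D : Type) (sa : seq A) (sb : seq B)
    (fa : A -> C) (fb : B -> C) (ga : A -> D) (gb : B -> D) : Prop :=
  forall a b, a \in sa -> b \in sb -> fa a = fb b -> ga a = gb b.

Lemma refines2_trans (A B : eqType) (C D E : Type) (sa : seq A) (sb : seq B)
    (fa : A -> C) fb (ga : A -> D) gb (ha : A -> E) hb :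
  refines2 sa sb fa fb ga gb -> refines2 sa sb ga gb ha hb -> refines2 sa sb fa fb ha hb.
Proof. by move=> fg gh a b aS bS /(fg a b aS bS) /(gh a b aS bS). Qed.

Section Transport.
Variables (Va Vb : finType) (Sa : seq (seq Va)) (Sb : seq (seq Vb)).
Hypotheses (dSa : is_dsc Sa) (dSb : is_dsc Sb).
Variables (C D : eqType) (ca : seq Va -> C) (cb : seq Vb -> C).
Variables (da : seq Va -> D) (db : seq Vb -> D).
Hypothesis cd : refines2 Sa Sb ca cb da db.

Lemma bnd_col_refines x y :
  x \in Sa -> y \in Sb -> bnd_col ca x = bnd_col cb y -> bnd_col da x = bnd_col db y.
Proof.
rewrite !bnd_colE => xS yS; apply: map_refines => a b /(dsc_faces dSa xS) aS /(dsc_faces dSb yS).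
exact: cd.
Qed.

Lemma up_cols_refines x y :
  x \in Sa -> y \in Sb -> all2 perm_eq (up_cols Sa ca x) (up_cols Sb cb y) ->
  all2 perm_eq (up_cols Sa da x) (up_cols Sb db y).
Proof.
move=> xS yS /up_colsP[Exy up_ij]; apply/up_colsP; split=> // i j ix jx.
apply: perm_map_refines (up_ij i j ix jx) => a b; rewrite !mem_filter.
case/andP=> /andP[/eqP a_size _] aS /andP[/andP[/eqP b_size _] bS] [face_ab ab].
have a1 : 1 < size a by rewrite a_size ltnS (dsc_size_gt0 dSa xS).
have b1 : 1 < size b by rewrite b_size ltnS (dsc_size_gt0 dSb yS).
by rewrite (cd aS bS ab) (cd (dsc_face dSa j aS a1) (dsc_face dSb j bS b1) face_ab).
Qed.

End Transport.

Section Colourings.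
Variables (C1 C2 : eqType) (H1 : res_sig C1 -> C1) (H2 : gen_sig C2 -> C2) (c1 : C1) (c2 : C2).
Hypotheses (H1_inj : res_hash_inj H1) (H2_inj : gen_hash_inj H2).

Lemma res_colS_eq (Va Vb : eqType) (Sa : seq (seq Va)) (Sb : seq (seq Vb)) t x y :
  res_col H1 c1 Sa t.+1 x = res_col H1 c1 Sb t.+1 y <->
  [/\ res_col H1 c1 Sa t x = res_col H1 c1 Sb t y,
      bnd_col (res_col H1 c1 Sa t) x = bnd_col (res_col H1 c1 Sb t) y &
      all2 perm_eq (up_cols Sa (res_col H1 c1 Sa t) x) (up_cols Sb (res_col H1 c1 Sb t) y)].
Proof. exact: H1_inj. Qed.

Lemma gen_colS_eq (Va Vb : eqType) (Sa : seq (seq Va)) (Sb : seq (seq Vb)) t x y :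
  gen_col H2 c2 Sa t.+1 x = gen_col H2 c2 Sb t.+1 y <->
  [/\ gen_col H2 c2 Sa t x = gen_col H2 c2 Sb t y,
      bnd_col (gen_col H2 c2 Sa t) x = bnd_col (gen_col H2 c2 Sb t) y,
      perm_eq (cobnd_col Sa (gen_col H2 c2 Sa t) x) (cobnd_col Sb (gen_col H2 c2 Sb t) y),
      all2 perm_eq (down_cols Sa (gen_col H2 c2 Sa t) x) (down_cols Sb (gen_col H2 c2 Sb t) y) &
      all2 perm_eq (up_cols Sa (gen_col H2 c2 Sa t) x) (up_cols Sb (gen_col H2 c2 Sb t) y)].
Proof. exact: H2_inj. Qed.

Variables (Va Vb : finType) (Sa : seq (seq Va)) (Sb : seq (seq Vb)).
Local Notation ra := (res_col H1 c1 Sa).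
Local Notation rb := (res_col H1 c1 Sb).
Local Notation ga := (gen_col H2 c2 Sa).
Local Notation gb := (gen_col H2 c2 Sb).

Lemma res_col_succ_refines t : refines2 Sa Sb (ra t.+1) (rb t.+1) (ra t) (rb t).
Proof. by move=> x y _ _ /res_colS_eq[]. Qed.

Lemma gen_col_succ_refines t : refines2 Sa Sb (ga t.+1) (gb t.+1) (ga t) (gb t).
Proof. by move=> x y _ _ /gen_colS_eq[]. Qed.

Hypotheses (dSa : is_dsc Sa) (dSb : is_dsc Sb).

Lemma res_col_stable_succ t :
  refines2 Sa Sb (ra t) (rb t) (ra t.+1) (rb t.+1) ->
  refines2 Sa Sb (ra t.+1) (rb t.+1) (ra t.+2) (rb t.+2).
Proof.
move=> st x y xS yS rxy; have /res_colS_eq[_ bxy uxy] := rxy.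
apply/res_colS_eq; split=> //.
  exact: (bnd_col_refines dSa dSb st xS yS bxy).
exact: (up_cols_refines dSa dSb st xS yS uxy).
Qed.

Lemma gen_col_stable_succ t :
  refines2 Sa Sb (ga t) (gb t) (ga t.+1) (gb t.+1) ->
  refines2 Sa Sb (ga t.+1) (gb t.+1) (ga t.+2) (gb t.+2).
Proof.
move=> st x y xS yS gxy; have /gen_colS_eq[_ bxy _ _ uxy] := gxy.
have /up_colsP[Exy _] := uxy.
have bxy' := bnd_col_refines dSa dSb st xS yS bxy.
have uxy' := up_cols_refines dSa dSb st xS yS uxy.
apply/gen_colS_eq; split=> //; first exact: cobnd_col_of_up_cols uxy'.
apply: (down_cols_of_faces Exy bxy') => x1 i ix.
have /gen_colS_eq[_ _ _ _] := bnd_col_face Exy bxy' x1 ix.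
by apply: (up_cols_refines dSa dSb st); apply: dsc_face; rewrite -?Exy.
Qed.

Lemma gen_col_refines_res t : refines2 Sa Sb (ga t) (gb t) (ra t) (rb t).
Proof.
elim: t => [//|t IH] x y xS yS /gen_colS_eq[gxy bxy _ _ uxy].
apply/res_colS_eq; split; first exact: IH.
  exact: (bnd_col_refines dSa dSb IH xS yS bxy).
exact: (up_cols_refines dSa dSb IH xS yS uxy).
Qed.

Lemma res_col_double_refines_gen t : refines2 Sa Sb (ra t.*2) (rb t.*2) (ga t) (gb t).
Proof.
elim: t => [//|t IH]; rewrite doubleS.
have IH1 : refines2 Sa Sb (ra t.*2.+1) (rb t.*2.+1) (ga t) (gb t).
  exact: refines2_trans (res_col_succ_refines (t := t.*2)) IH.
move=> x y xS yS /res_colS_eq[rxy bxy uxy].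
have /up_colsP[Exy _] := uxy.
have bxy' := bnd_col_refines dSa dSb IH1 xS yS bxy.
have uxy' := up_cols_refines dSa dSb IH1 xS yS uxy.
apply/gen_colS_eq; split=> //; first exact: IH1.
  exact: cobnd_col_of_up_cols uxy'.
apply: (down_cols_of_faces Exy bxy') => x1 i ix.
have /res_colS_eq[_ _] := bnd_col_face Exy bxy x1 ix.
by apply: (up_cols_refines dSa dSb IH); apply: dsc_face; rewrite -?Exy.
Qed.

End Colourings.

Definition refines_on (X : eqType) (C D : Type) (L : seq X) (f : X -> C) (g : X -> D) : Prop :=
  refines2 L L f f g g.

Lemma refines_on_stable (X : eqType) (C : Type) (L : seq X) (K : nat -> X -> C) :
  (forall t, refines_on L (K t) (K t.+1) -> refines_on L (K t.+1) (K t.+2)) ->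
  forall t n, refines_on L (K t) (K t.+1) -> t <= n -> refines_on L (K t) (K n).
Proof.
move=> K_succ t n st le_tn; rewrite -(subnK le_tn).
have st_from m : refines_on L (K (m + t)) (K (m + t).+1) by elim: m => // m; apply: K_succ.
elim: (n - t) => [|m IH]; first by move=> x y _ _.
exact: refines2_trans IH (st_from m).
Qed.

Definition stably_separates (X : eqType) (C : eqType) (L : seq X) (K : nat -> X -> C)
    (A B : seq X) : Prop :=
  exists t, refines_on L (K t) (K t.+1) /\ ~~ perm_eq (map (K t) A) (map (K t) B).

Section StableSeparation.
Variables (X : eqType) (L A B : seq X).
Hypotheses (AL : {subset A <= L}) (BL : {subset B <= L}).

Lemma perm_map_equiv (C D : eqType) (f : X -> C) (g : X -> D) :
  refines_on L f g -> refines_on L g f ->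
  perm_eq (map f A) (map f B) = perm_eq (map g A) (map g B).
Proof.
move=> fg gf; apply/idP/idP; apply: perm_map_refines => a b aA bB.
  exact: fg (AL aA) (BL bB).
exact: gf (AL aA) (BL bB).
Qed.

Lemma stably_separates_equiv (C1 C2 : eqType) (KR : nat -> X -> C1) (KG : nat -> X -> C2) :
  (forall t, refines_on L (KG t) (KR t)) -> (forall t, refines_on L (KR t.*2) (KG t)) ->
  (forall t, refines_on L (KR t) (KR t.+1) -> refines_on L (KR t.+1) (KR t.+2)) ->
  (forall t, refines_on L (KG t) (KG t.+1) -> refines_on L (KG t.+1) (KG t.+2)) ->
  stably_separates L KR A B <-> stably_separates L KG A B.
Proof.
move=> KG_KR KR_KG KR_stable KG_stable; split=> -[t [st sep]].
  have KR_t n : t <= n -> refines_on L (KR t) (KR n) := refines_on_stable KR_stable st.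
  have KR_KG_t : refines_on L (KR t) (KG t) by apply: refines2_trans (KR_t _ _) (KR_KG t); lia.
  exists t; split; last by rewrite (perm_map_equiv (KG_KR t) KR_KG_t).
  by apply: refines2_trans (KG_KR t) (refines2_trans (KR_t _ _) (KR_KG t.+1)); lia.
have KG_t n : t <= n -> refines_on L (KG t) (KG n) := refines_on_stable KG_stable st.
have KG_KR_t : refines_on L (KG t) (KR t.*2) by apply: refines2_trans (KG_t _ _) (KG_KR _); lia.
exists t.*2; split; last by rewrite (perm_map_equiv (KR_KG t) KG_KR_t).
by apply: refines2_trans (KR_KG t) (refines2_trans (KG_t _ _) (KG_KR _)); lia.
Qed.

End StableSeparation.

Definition copair (A B T : Type) (f : A -> T) (g : B -> T) (x : A + B) : T :=
  match x with inl a => f a | inr b => g b end.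

Definition dunion (A B : Type) (sa : seq A) (sb : seq B) : seq (A + B) :=
  map inl sa ++ map inr sb.

Lemma mem_dunion_l (A B : eqType) (sa : seq A) (sb : seq B) a :
  (inl a \in dunion sa sb) = (a \in sa).
Proof.
rewrite mem_cat (mem_map (@inl_inj _ _)) orb_idr //.
by case/mapP.
Qed.

Lemma mem_dunion_r (A B : eqType) (sa : seq A) (sb : seq B) b :
  (inr b \in dunion sa sb) = (b \in sb).
Proof.
rewrite mem_cat (mem_map (@inr_inj _ _)) orb_idl //.
by case/mapP.
Qed.

Lemma refines_on_dunion (A B : eqType) (C D : Type) (sa : seq A) (sb : seq B)
    (fa : A -> C) (fb : B -> C) (ga : A -> D) (gb : B -> D) :
  refines_on (dunion sa sb) (copair fa fb) (copair ga gb) <->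
  [/\ refines2 sa sa fa fa ga ga, refines2 sb sb fb fb gb gb & refines2 sa sb fa fb ga gb].
Proof.
split=> [fg | [fg_aa fg_bb fg_ab]].
  split=> a b aS bS.
  - by apply: (fg (inl a) (inl b)); rewrite mem_dunion_l.
  - by apply: (fg (inr a) (inr b)); rewrite mem_dunion_r.
  - by apply: (fg (inl a) (inr b)); rewrite ?mem_dunion_l ?mem_dunion_r.
move=> [a|a] [b|b]; rewrite ?mem_dunion_l ?mem_dunion_r /= => aS bS.
- exact: fg_aa.
- exact: fg_ab.
- by move/esym/(fg_ab _ _ bS aS)/esym.
- exact: fg_bb.
Qed.

Section JointColouring.
Variables (V1 V2 C : eqType) (col1 : nat -> seq V1 -> C) (col2 : nat -> seq V2 -> C).
Variables (S1 : seq (seq V1)) (S2 : seq (seq V2)).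

Definition joint_col t := copair (col1 t) (col2 t).

Lemma stable_atE t :
  stable_at col1 S1 col2 S2 t <->
  refines_on (dunion S1 S2) (joint_col t) (joint_col t.+1) /\
  refines_on (dunion S1 S2) (joint_col t.+1) (joint_col t).
Proof.
rewrite !refines_on_dunion; split=> [[st11 st22 st12] | [[f11 f22 f12] [b11 b22 b12]]].
  split; split=> a b aS bS;
    [exact: (st11 _ _ aS bS).1 | exact: (st22 _ _ aS bS).1 | exact: (st12 _ _ aS bS).1
    |exact: (st11 _ _ aS bS).2 | exact: (st22 _ _ aS bS).2 | exact: (st12 _ _ aS bS).2].
split=> a b aS bS; split;
  by [apply: f11 | apply: b11 | apply: f22 | apply: b22 | apply: f12 | apply: b12].
Qed.

Lemma distinguishesE :
  (forall t, refines_on (dunion S1 S2) (joint_col t.+1) (joint_col t)) ->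
  distinguishes col1 S1 col2 S2 <->
  stably_separates (dunion S1 S2) joint_col (map inl S1) (map inr S2).
Proof.
move=> joint_succ; split=> -[t [st sep]]; exists t.
  by have [st' _] := (stable_atE t).1 st; split; last by rewrite -!map_comp.
by split; [apply/stable_atE | move: sep; rewrite -!map_comp].
Qed.

End JointColouring.

Theorem lemma1 (C1 C2 : eqType)
  (H1 : res_sig C1 -> C1) (H2 : gen_sig C2 -> C2) (c1 : C1) (c2 : C2)
  (hH1 : res_hash_inj H1) (hH2 : gen_hash_inj H2)
  (V1 V2 : finType) (S1 : seq (seq V1)) (S2 : seq (seq V2))
  (hS1 : is_dsc S1) (hS2 : is_dsc S2) :
  distinguishes (res_col H1 c1 S1) S1 (res_col H1 c1 S2) S2 <->
  distinguishes (gen_col H2 c2 S1) S1 (gen_col H2 c2 S2) S2.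
Proof.
pose R := joint_col (res_col H1 c1 S1) (res_col H1 c1 S2).
pose G := joint_col (gen_col H2 c2 S1) (gen_col H2 c2 S2).
have R_succ t : refines_on (dunion S1 S2) (R t.+1) (R t).
  by apply/refines_on_dunion; split; apply: res_col_succ_refines.
have G_succ t : refines_on (dunion S1 S2) (G t.+1) (G t).
  by apply/refines_on_dunion; split; apply: gen_col_succ_refines.
rewrite (distinguishesE R_succ) (distinguishesE G_succ).
apply: stably_separates_equiv => [s|s|t|t|t|t].
- by rewrite mem_cat => ->.
- by rewrite mem_cat orbC => ->.
- by apply/refines_on_dunion; split; apply: gen_col_refines_res.
- by apply/refines_on_dunion; split; apply: res_col_double_refines_gen.
- case/refines_on_dunion=> st11 st22 st12.
  by apply/refines_on_dunion; split; apply: res_col_stable_succ.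
- case/refines_on_dunion=> st11 st22 st12.
  by apply/refines_on_dunion; split; apply: gen_col_stable_succ.
Qed.
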